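(* For any alphabet $\Sigma$, the category of transition systems labelled on $\Sigma$ (the full subcategory of $\mathcal{G}/\Sigma$ on the transition systems) is a quasitopos.
   Context: $\mathcal{G}$ is the topos of graphs: a graph has a set of nodes, a set of arcs and source/target maps (parallel arcs and self-loops allowed), and morphisms preserve source and target. For a set $\Sigma$, also denote by $\Sigma$ the graph with one node and arc set $\Sigma$; the slice category $\mathcal{G}/\Sigma$ consists of graphs with arcs labelled by elements of $\Sigma$ and label-preserving graph morphisms. A transition system labelled on $\Sigma$ is such a labelled graph in which, for every pair of nodes $x,y$ and every $\alpha\in\Sigma$, there is at most one arc from $x$ to $y$ labelled $\alpha$. *)

From Stdlib Require Import ProofIrrelevance FunctionalExtensionality.

Set Implicit Arguments.

Record Category := {
  Ob :> Type;
  Hom : Ob -> Ob -> Type;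
  idm : forall A, Hom A A;
  comp : forall A B D, Hom B D -> Hom A B -> Hom A D;
  comp_assoc : forall A B D E (h : Hom D E) (g : Hom B D) (f : Hom A B),
      comp h (comp g f) = comp (comp h g) f;
  comp_id_l : forall A B (f : Hom A B), comp (idm B) f = f;
  comp_id_r : forall A B (f : Hom A B), comp f (idm A) = f
}.

Arguments Hom {c} A B.
Arguments idm {c} A.
Arguments comp {c A B D} g f.

Section Notions.
Variable C : Category.

Definition is_terminal (T : C) : Prop :=
  forall X : C, exists f : Hom X T, forall g : Hom X T, g = f.

Definition is_initial (I : C) : Prop :=
  forall X : C, exists f : Hom I X, forall g : Hom I X, g = f.

Definition is_product {A B P : C} (p1 : Hom P A) (p2 : Hom P B) : Prop :=
  forall (Z : C) (f : Hom Z A) (g : Hom Z B),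
    exists h : Hom Z P, (comp p1 h = f /\ comp p2 h = g) /\
      forall h' : Hom Z P, comp p1 h' = f /\ comp p2 h' = g -> h' = h.

Definition is_coproduct {A B S : C} (i1 : Hom A S) (i2 : Hom B S) : Prop :=
  forall (Z : C) (f : Hom A Z) (g : Hom B Z),
    exists h : Hom S Z, (comp h i1 = f /\ comp h i2 = g) /\
      forall h' : Hom S Z, comp h' i1 = f /\ comp h' i2 = g -> h' = h.

Definition is_equalizer {X Y : C} (f g : Hom X Y) {E : C} (e : Hom E X) : Prop :=
  comp f e = comp g e /\
  forall (Z : C) (h : Hom Z X), comp f h = comp g h ->
    exists u : Hom Z E, comp e u = h /\
      forall u' : Hom Z E, comp e u' = h -> u' = u.

Definition is_coequalizer {X Y : C} (f g : Hom X Y) {Q : C} (q : Hom Y Q) : Prop :=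
  comp q f = comp q g /\
  forall (Z : C) (h : Hom Y Z), comp h f = comp h g ->
    exists u : Hom Q Z, comp u q = h /\
      forall u' : Hom Q Z, comp u' q = h -> u' = u.

Definition is_pullback {X Y Z : C} (f : Hom X Z) (g : Hom Y Z)
    {P : C} (p1 : Hom P X) (p2 : Hom P Y) : Prop :=
  comp f p1 = comp g p2 /\
  forall (W : C) (a : Hom W X) (b : Hom W Y), comp f a = comp g b ->
    exists h : Hom W P, (comp p1 h = a /\ comp p2 h = b) /\
      forall h' : Hom W P, comp p1 h' = a /\ comp p2 h' = b -> h' = h.

Definition has_terminal : Prop := exists T : C, is_terminal T.
Definition has_initial : Prop := exists I : C, is_initial I.
Definition has_binary_products : Prop :=
  forall A B : C, exists (P : C) (p1 : Hom P A) (p2 : Hom P B), is_product p1 p2.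
Definition has_binary_coproducts : Prop :=
  forall A B : C, exists (S : C) (i1 : Hom A S) (i2 : Hom B S), is_coproduct i1 i2.
Definition has_equalizers : Prop :=
  forall (X Y : C) (f g : Hom X Y), exists (E : C) (e : Hom E X), is_equalizer f g e.
Definition has_coequalizers : Prop :=
  forall (X Y : C) (f g : Hom X Y), exists (Q : C) (q : Hom Y Q), is_coequalizer f g q.

Definition has_finite_limits : Prop :=
  has_terminal /\ has_binary_products /\ has_equalizers.

Definition has_finite_colimits : Prop :=
  has_initial /\ has_binary_coproducts /\ has_coequalizers.

Definition is_exponential {A B E P : C} (pi1 : Hom P E) (pi2 : Hom P A)
    (ev : Hom P B) : Prop :=
  is_product pi1 pi2 /\
  forall (Z Q : C) (q1 : Hom Q Z) (q2 : Hom Q A), is_product q1 q2 ->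
    forall g : Hom Q B,
      exists h : Hom Z E,
        (exists k : Hom Q P, comp pi1 k = comp h q1 /\ comp pi2 k = q2 /\
                             comp ev k = g) /\
        forall h' : Hom Z E,
          (exists k : Hom Q P, comp pi1 k = comp h' q1 /\ comp pi2 k = q2 /\
                               comp ev k = g) -> h' = h.

Definition has_exponentials : Prop :=
  forall A B : C, exists (E P : C) (pi1 : Hom P E) (pi2 : Hom P A) (ev : Hom P B),
    is_exponential pi1 pi2 ev.

Definition cartesian_closed : Prop :=
  has_terminal /\ has_binary_products /\ has_exponentials.

Definition regular_mono {A X : C} (m : Hom A X) : Prop :=
  exists (Y : C) (f g : Hom X Y), is_equalizer f g m.

Definition has_regular_subobject_classifier : Prop :=
  exists (T : C) (Omega : C) (tru : Hom T Omega),
    is_terminal T /\ regular_mono tru /\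
    forall (A X : C) (m : Hom A X), regular_mono m ->
      exists chi : Hom X Omega,
        (exists t : Hom A T, is_pullback chi tru m t) /\
        forall chi' : Hom X Omega,
          (exists t : Hom A T, is_pullback chi' tru m t) -> chi' = chi.

End Notions.
Arguments is_terminal {C} T.
Arguments is_initial {C} I.


Section Slice.
Variables (C : Category) (X : C).

Definition slice_ob := { A : C & Hom A X }.
Definition slice_hom (a b : slice_ob) :=
  { h : Hom (projT1 a) (projT1 b) | comp (projT2 b) h = projT2 a }.

Definition slice_id (a : slice_ob) : slice_hom a a :=
  exist _ (idm (projT1 a)) (@comp_id_r C _ _ (projT2 a)).

Definition slice_comp (a b d : slice_ob) (g : slice_hom b d) (f : slice_hom a b)
  : slice_hom a d.
Proof.
  exists (comp (proj1_sig g) (proj1_sig f)).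
  rewrite comp_assoc, (proj2_sig g). exact (proj2_sig f).
Defined.

Lemma slice_hom_eq (a b : slice_ob) (f g : slice_hom a b) :
  proj1_sig f = proj1_sig g -> f = g.
Proof.
  destruct f as [f pf], g as [g pg]; simpl; intros ->.
  f_equal; apply proof_irrelevance.
Qed.

Definition slice : Category.
Proof.
  refine (@Build_Category slice_ob slice_hom slice_id slice_comp _ _ _);
  intros; apply slice_hom_eq; simpl;
  [apply comp_assoc | apply comp_id_l | apply comp_id_r].
Defined.

End Slice.

Definition locally_cartesian_closed (C : Category) : Prop :=
  forall X : C, cartesian_closed (slice C X).

Definition quasitopos (C : Category) : Prop :=
  has_finite_limits C /\ has_finite_colimits C /\
  locally_cartesian_closed C /\ has_regular_subobject_classifier C.

(** * Graphs labelled on Sigma, i.e. objects of G / Sigma *)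

Record LGraph (Sigma : Type) := {
  nodes : Type;
  arcs : Type;
  src : arcs -> nodes;
  tgt : arcs -> nodes;
  lab : arcs -> Sigma
}.

Record LHom (Sigma : Type) (G H : LGraph Sigma) := {
  nmap : nodes G -> nodes H;
  amap : arcs G -> arcs H;
  hom_src : forall a, src H (amap a) = nmap (src G a);
  hom_tgt : forall a, tgt H (amap a) = nmap (tgt G a);
  hom_lab : forall a, lab H (amap a) = lab G a
}.

Lemma LHom_ext (Sigma : Type) (G H : LGraph Sigma) (f g : LHom G H) :
  nmap f = nmap g -> amap f = amap g -> f = g.
Proof.
  destruct f, g; simpl; intros -> ->; f_equal; apply proof_irrelevance.
Qed.

Definition LHom_id (Sigma : Type) (G : LGraph Sigma) : LHom G G :=
  @Build_LHom Sigma G G (fun x => x) (fun a => a)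
    (fun a => eq_refl) (fun a => eq_refl) (fun a => eq_refl).

Definition LHom_comp (Sigma : Type) (G H K : LGraph Sigma)
  (g : LHom H K) (f : LHom G H) : LHom G K.
Proof.
  refine (@Build_LHom Sigma G K (fun x => nmap g (nmap f x))
                                (fun a => amap g (amap f a)) _ _ _); intro a.
  - rewrite hom_src, hom_src; reflexivity.
  - rewrite hom_tgt, hom_tgt; reflexivity.
  - rewrite hom_lab, hom_lab; reflexivity.
Defined.

Definition is_transition_system (Sigma : Type) (G : LGraph Sigma) : Prop :=
  forall a b : arcs G, src G a = src G b -> tgt G a = tgt G b ->
                       lab G a = lab G b -> a = b.

Definition TSys (Sigma : Type) := { G : LGraph Sigma | is_transition_system G }.

Definition TS_cat (Sigma : Type) : Category.
Proof.
  refine (@Build_Category (TSys Sigma)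
            (fun G H => LHom (proj1_sig G) (proj1_sig H))
            (fun G => LHom_id (proj1_sig G))
            (fun G H K g f => LHom_comp g f) _ _ _);
  intros; apply LHom_ext; reflexivity.
Defined.

From Stdlib Require Import ProofIrrelevance FunctionalExtensionality ClassicalEpsilon
  PropExtensionality Relation_Operators Bool.

(* A transition system is, up to isomorphism, a set of nodes V with a relation
   E ⊆ V × V × Σ, and a morphism is just a map of nodes preserving E: the arc map is
   forced by uniqueness of arcs.  So everything is computed on nodes.  Limits and
   coproducts carry the evident relations; a coequalizer is the quotient by the
   generated equivalence, with the image relation.  In the slice over X, products are
   pullbacks and the exponential is built fibrewise.  A regular mono is an equalizer,
   hence the full subsystem on its image, so it is classified by the characteristic
   map of its image into the two-node system with every possible arc. *)

Section ProductFacts.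
Context {C : Category}.

Lemma product_comparison {A B P Q : C} {p1 : Hom P A} {p2 : Hom P B}
    {q1 : Hom Q A} {q2 : Hom Q B} :
  is_product C p1 p2 -> is_product C q1 q2 ->
  exists (c : Hom P Q) (d : Hom Q P),
    comp q1 c = p1 /\ comp q2 c = p2 /\ comp p1 d = q1 /\ comp p2 d = q2 /\
    comp c d = idm Q.
Proof.
  intros HP HQ.
  destruct (HQ P p1 p2) as [c [[Hc1 Hc2] _]].
  destruct (HP Q q1 q2) as [d [[Hd1 Hd2] _]].
  destruct (HQ Q q1 q2) as [i [_ Hi]].
  exists c, d; repeat split; auto.
  rewrite (Hi (comp c d)), (Hi (idm Q)); auto.
  - split; apply comp_id_r.
  - rewrite !comp_assoc, Hc1, Hc2; auto.
Qed.

Lemma exponential_of_chosen_products {A B E P : C}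
    (pi1 : Hom P E) (pi2 : Hom P A) (ev : Hom P B)
    (ZxA : C -> C) (pr_Z : forall Z, Hom (ZxA Z) Z) (pr_A : forall Z, Hom (ZxA Z) A) :
  is_product C pi1 pi2 -> (forall Z, is_product C (pr_Z Z) (pr_A Z)) ->
  (forall Z (g : Hom (ZxA Z) B), exists h : Hom Z E,
     (exists k, comp pi1 k = comp h (pr_Z Z) /\ comp pi2 k = pr_A Z /\ comp ev k = g) /\
     forall h' : Hom Z E,
       (exists k, comp pi1 k = comp h' (pr_Z Z) /\ comp pi2 k = pr_A Z /\ comp ev k = g) ->
       h' = h) ->
  is_exponential C pi1 pi2 ev.
Proof.
  intros HP HZxA Huniv; split; [exact HP|].
  intros Z Q q1 q2 HQ g.
  destruct (product_comparison (HZxA Z) HQ) as [c [d [Hc1 [Hc2 [Hd1 [Hd2 Hcd]]]]]].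
  destruct (Huniv Z (comp g c)) as [h [[k [Hk1 [Hk2 Hk3]]] Hh]].
  exists h; split.
  - exists (comp k d).
    rewrite !comp_assoc, Hk1, Hk2, Hk3, <- !comp_assoc, Hd1, Hd2, Hcd, comp_id_r; auto.
  - intros h' [k' [Hk1' [Hk2' Hk3']]]; apply Hh; exists (comp k' c).
    rewrite !comp_assoc, Hk1', Hk2', Hk3', <- !comp_assoc, Hc1, Hc2; auto.
Qed.

Lemma pullback_over_terminal_is_product {T A B P : C} (tA : Hom A T) (tB : Hom B T)
    (p1 : Hom P A) (p2 : Hom P B) :
  is_terminal T -> is_pullback C tA tB p1 p2 -> is_product C p1 p2.
Proof.
  intros HT [_ Hu] Z f g; apply Hu.
  destruct (HT Z) as [t Ht]; rewrite (Ht (comp tA f)), (Ht (comp tB g)); reflexivity.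
Qed.

End ProductFacts.

Section SliceFacts.
Context {C : Category} {X : C}.

Lemma slice_hom_comm {a b : slice C X} (f : Hom a b) :
  comp (projT2 b) (proj1_sig f) = projT2 a.
Proof. exact (proj2_sig f). Qed.

Lemma slice_id_terminal : is_terminal (existT (fun A : C => Hom A X) X (idm X) : slice C X).
Proof.
  intro a.
  exists (exist (fun h => comp (idm X) h = projT2 a) (projT2 a) (@comp_id_l C _ _ (projT2 a))).
  intro g; apply slice_hom_eq; simpl.
  rewrite <- (slice_hom_comm g); symmetry; apply comp_id_l.
Qed.

Section PullbackProduct.
Variables (a b : slice C X) (P : C) (p1 : Hom P (projT1 a)) (p2 : Hom P (projT1 b)).
Hypothesis Hpb : is_pullback C (projT2 a) (projT2 b) p1 p2.

Definition pullback_ob : slice C X := existT _ P (comp (projT2 a) p1).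
Definition pullback_pr1 : Hom pullback_ob a := exist _ p1 eq_refl.
Definition pullback_pr2 : Hom pullback_ob b := exist _ p2 (eq_sym (proj1 Hpb)).

Lemma pullback_is_slice_product : is_product (slice C X) pullback_pr1 pullback_pr2.
Proof.
  intros Z f g.
  destruct (proj2 Hpb (projT1 Z) (proj1_sig f) (proj1_sig g)) as [h [[Hh1 Hh2] Hu]].
  { rewrite !slice_hom_comm; reflexivity. }
  assert (Hh : comp (comp (projT2 a) p1) h = projT2 Z)
    by (rewrite <- comp_assoc, Hh1; apply slice_hom_comm).
  exists (exist _ h Hh); split.
  - split; apply slice_hom_eq; assumption.
  - intros h' [E1 E2]; apply slice_hom_eq, Hu; simpl.
    split; [apply (f_equal (@proj1_sig _ _) E1) | apply (f_equal (@proj1_sig _ _) E2)].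
Qed.

End PullbackProduct.
End SliceFacts.

Arguments pullback_ob {C X a P} p1.
Arguments pullback_pr1 {C X a P} p1.
Arguments pullback_pr2 {C X a b P p1 p2} Hpb.
Arguments pullback_is_slice_product {C X a b P p1 p2} Hpb.

Section Quotient.
Context {T : Type} (r : T -> T -> Prop).
Local Notation eqv := (clos_refl_sym_trans T r).

Definition quotient : Type := {P : T -> Prop | exists t, P = eqv t}.

Definition class (t : T) : quotient := exist _ (eqv t) (ex_intro _ t eq_refl).

Definition rep (p : quotient) : T :=
  proj1_sig (constructive_indefinite_description _ (proj2_sig p)).

Lemma class_rep p : class (rep p) = p.
Proof.
  unfold rep; destruct (constructive_indefinite_description _ _) as [t Ht].
  apply eq_sig_hprop; [intros; apply proof_irrelevance|]; symmetry; exact Ht.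
Qed.

Lemma class_eq t t' : eqv t t' -> class t = class t'.
Proof.
  intro H; apply eq_sig_hprop; [intros; apply proof_irrelevance|]; simpl.
  apply functional_extensionality; intro s; apply propositional_extensionality; split.
  - intro Hs; apply rst_trans with t; [apply rst_sym|]; assumption.
  - intro Hs; apply rst_trans with t'; assumption.
Qed.

Lemma eqv_rep_class t : eqv t (rep (class t)).
Proof.
  assert (E := f_equal (@proj1_sig _ _) (class_rep (class t))); simpl in E.
  rewrite <- E; apply rst_refl.
Qed.

Lemma eqv_respect {U : Type} (h : T -> U) :
  (forall t t', r t t' -> h t = h t') -> forall t t', eqv t t' -> h t = h t'.
Proof.
  intros Hh t t' H; induction H; [apply Hh; assumption|reflexivity|symmetry; assumption|].
  congruence.
Qed.

End Quotient.

Arguments rep {T r} p.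
Arguments class_rep {T r} p.

Section TransitionSystems.
Context {Sigma : Type}.
Local Notation TS := (TS_cat Sigma).
Local Notation node A := (nodes (proj1_sig A)).

Definition adj (A : TS) (x y : node A) (l : Sigma) : Prop :=
  exists a, src _ a = x /\ tgt _ a = y /\ lab _ a = l.

Lemma hom_adj {A B : TS} (f : Hom A B) x y l :
  adj A x y l -> adj B (nmap f x) (nmap f y) l.
Proof.
  intros [a [<- [<- <-]]]; exists (amap f a).
  rewrite hom_src, hom_tgt, hom_lab; auto.
Qed.

Lemma hom_ext {A B : TS} (f g : Hom A B) : (forall x, nmap f x = nmap g x) -> f = g.
Proof.
  intro E; assert (En : nmap f = nmap g) by (apply functional_extensionality; exact E).
  apply LHom_ext; [exact En|].
  apply functional_extensionality; intro a; apply (proj2_sig B).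
  - rewrite !hom_src, En; reflexivity.
  - rewrite !hom_tgt, En; reflexivity.
  - rewrite !hom_lab; reflexivity.
Qed.

Lemma nmap_congr {A B : TS} {f g : Hom A B} : f = g -> forall x, nmap f x = nmap g x.
Proof. intros ->; reflexivity. Qed.

Definition hom_of {A B : TS} (f : node A -> node B)
    (Hf : forall x y l, adj A x y l -> adj B (f x) (f y) l) : Hom A B.
Proof.
  refine (@Build_LHom Sigma (proj1_sig A) (proj1_sig B) f
    (fun a => proj1_sig (constructive_indefinite_description _
       (Hf _ _ _ (ex_intro _ a (conj eq_refl (conj eq_refl eq_refl)))))) _ _ _);
  intro a; destruct (constructive_indefinite_description _ _) as [b [Hs [Ht Hl]]];
  assumption.
Defined.

Definition rel_graph (V : Type) (E : V -> V -> Sigma -> Prop) : LGraph Sigma :=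
  {| nodes := V;
     arcs := {t : V * V * Sigma | E (fst (fst t)) (snd (fst t)) (snd t)};
     src := fun a => fst (fst (proj1_sig a));
     tgt := fun a => snd (fst (proj1_sig a));
     lab := fun a => snd (proj1_sig a) |}.

Lemma rel_graph_ts V E : is_transition_system (rel_graph V E).
Proof.
  intros [[[x y] l] p] [[[x' y'] l'] p']; simpl; intros -> -> ->.
  f_equal; apply proof_irrelevance.
Qed.

Definition rel_ts V E : TS := exist _ (rel_graph V E) (rel_graph_ts V E).

Lemma adj_rel_ts V E x y l : adj (rel_ts V E) x y l <-> E x y l.
Proof.
  split.
  - intros [[[[x' y'] l'] p] [Hs [Ht Hl]]]; simpl in *; subst; exact p.
  - intro p; exists (exist _ (x, y, l) p); simpl; auto.
Qed.

Definition one : TS := rel_ts unit (fun _ _ _ => True).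

Definition to_one (A : TS) : Hom A one :=
  @hom_of A one (fun _ => tt) (fun _ _ _ _ => proj2 (adj_rel_ts _ _ _ _ _) I).

Lemma to_one_unique {A : TS} (u : Hom A one) : u = to_one A.
Proof. apply hom_ext; intro x; destruct (nmap u x); reflexivity. Qed.

Lemma one_terminal : is_terminal one.
Proof. intro A; exists (to_one A); apply to_one_unique. Qed.

Definition zero : TS := rel_ts Empty_set (fun _ _ _ => False).

Lemma zero_initial : is_initial zero.
Proof.
  intro A; unshelve eexists (@hom_of zero A (fun e : Empty_set => match e with end) _).
  - intros [].
  - intro g; apply hom_ext; intros [].
Qed.

Section Pullback.
Context {A B Z : TS} (f : Hom A Z) (g : Hom B Z).

Definition pb_ts : TS :=
  rel_ts {w : node A * node B | nmap f (fst w) = nmap g (snd w)}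
    (fun w w' l => adj A (fst (proj1_sig w)) (fst (proj1_sig w')) l /\
                   adj B (snd (proj1_sig w)) (snd (proj1_sig w')) l).

Definition pb1 : Hom pb_ts A :=
  @hom_of pb_ts A (fun w => fst (proj1_sig w))
    (fun _ _ _ H => proj1 (proj1 (adj_rel_ts _ _ _ _ _) H)).
Definition pb2 : Hom pb_ts B :=
  @hom_of pb_ts B (fun w => snd (proj1_sig w))
    (fun _ _ _ H => proj2 (proj1 (adj_rel_ts _ _ _ _ _) H)).

Lemma pb_is_pullback : is_pullback TS f g pb1 pb2.
Proof.
  split; [apply hom_ext; intros [w Hw]; exact Hw|].
  intros W a b Hab.
  unshelve eexists
    (@hom_of W pb_ts (fun v => exist _ (nmap a v, nmap b v) (nmap_congr Hab v)) _).
  - intros x y l H; apply adj_rel_ts; split; apply hom_adj, H.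
  - split; [split; apply hom_ext; reflexivity|].
    intros h' [<- <-]; apply hom_ext; intro v; simpl.
    apply eq_sig_hprop; [intros; apply proof_irrelevance|].
    apply surjective_pairing.
Qed.

End Pullback.

Lemma ts_has_binary_products : has_binary_products TS.
Proof.
  intros A B; exists (pb_ts (to_one A) (to_one B)), (pb1 _ _), (pb2 _ _).
  exact (pullback_over_terminal_is_product _ _ _ _ one_terminal (pb_is_pullback _ _)).
Qed.

Definition sum_ts (A B : TS) : TS :=
  rel_ts (node A + node B) (fun x y l => match x, y with
    | inl a, inl a' => adj A a a' l
    | inr b, inr b' => adj B b b' l
    | _, _ => False end).

Lemma ts_has_binary_coproducts : has_binary_coproducts TS.
Proof.
  intros A B; exists (sum_ts A B).
  unshelve eexists (@hom_of A (sum_ts A B) inl _); [intros; apply adj_rel_ts; assumption|].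
  unshelve eexists (@hom_of B (sum_ts A B) inr _); [intros; apply adj_rel_ts; assumption|].
  intros Z f g.
  unshelve eexists (@hom_of (sum_ts A B) Z
    (fun s => match s with inl a => nmap f a | inr b => nmap g b end) _).
  - intros [a|b] [a'|b'] l H; apply (proj1 (adj_rel_ts _ _ _ _ _)) in H;
      [apply hom_adj, H|contradiction|contradiction|apply hom_adj, H].
  - split; [split; apply hom_ext; reflexivity|].
    intros h' [<- <-]; apply hom_ext; intros [a|b]; reflexivity.
Qed.

Section Equalizer.
Context {A B : TS} (f g : Hom A B).

Definition eq_ts : TS :=
  rel_ts {x : node A | nmap f x = nmap g x}
    (fun x y l => adj A (proj1_sig x) (proj1_sig y) l).

Definition eq_incl : Hom eq_ts A :=
  @hom_of eq_ts A (@proj1_sig _ _) (fun _ _ _ H => proj1 (adj_rel_ts _ _ _ _ _) H).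

Lemma eq_incl_is_equalizer : is_equalizer TS f g eq_incl.
Proof.
  split; [apply hom_ext; intros [x Hx]; exact Hx|].
  intros Z h Hh.
  unshelve eexists (@hom_of Z eq_ts (fun z => exist _ (nmap h z) (nmap_congr Hh z)) _).
  - intros x y l H; apply adj_rel_ts, hom_adj, H.
  - split; [apply hom_ext; reflexivity|].
    intros u <-; apply hom_ext; intro z.
    apply eq_sig_hprop; [intros; apply proof_irrelevance|reflexivity].
Qed.

End Equalizer.

Section Coequalizer.
Context {A B : TS} (f g : Hom A B).

Definition coeq_rel (y y' : node B) : Prop := exists x, nmap f x = y /\ nmap g x = y'.

Definition coeq_ts : TS :=
  rel_ts (quotient coeq_rel) (fun p q l =>
    exists y y', class coeq_rel y = p /\ class coeq_rel y' = q /\ adj B y y' l).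

Definition coeq_map : Hom B coeq_ts :=
  @hom_of B coeq_ts (class coeq_rel)
    (fun y y' l H => proj2 (adj_rel_ts _ _ _ _ _)
       (ex_intro _ y (ex_intro _ y' (conj eq_refl (conj eq_refl H))))).

Lemma coeq_map_is_coequalizer : is_coequalizer TS f g coeq_map.
Proof.
  split.
  - apply hom_ext; intro x; apply class_eq, rst_step; exists x; auto.
  - intros Z h Hh.
    assert (Hrep : forall y, nmap h (rep (class coeq_rel y)) = nmap h y).
    { intro y; symmetry; apply (eqv_respect coeq_rel (nmap h)); [|apply eqv_rep_class].
      intros _ _ [x [<- <-]]; exact (nmap_congr Hh x). }
    unshelve eexists (@hom_of coeq_ts Z (fun p => nmap h (rep p)) _).
    + intros p q l H; apply (proj1 (adj_rel_ts _ _ _ _ _)) in H.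
      destruct H as [y [y' [<- [<- H]]]]; rewrite !Hrep; apply hom_adj, H.
    + split; [apply hom_ext, Hrep|].
      intros u <-; apply hom_ext; intro p; simpl.
      rewrite <- (class_rep p) at 1; reflexivity.
Qed.

End Coequalizer.

Definition omega : TS := rel_ts bool (fun _ _ _ => True).

Definition true_ts : Hom one omega :=
  @hom_of one omega (fun _ => true) (fun _ _ _ _ => proj2 (adj_rel_ts _ _ _ _ _) I).

Lemma true_regular_mono : regular_mono TS true_ts.
Proof.
  exists omega, (idm omega), (comp true_ts (to_one omega)); split.
  - apply hom_ext; reflexivity.
  - intros Z h Hh; exists (to_one Z); split.
    + apply hom_ext; intro z; exact (eq_sym (nmap_congr Hh z)).
    + intros u _; apply to_one_unique.
Qed.

Definition dot : TS := rel_ts unit (fun _ _ _ => False).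

Definition point {A : TS} (x : node A) : Hom dot A :=
  @hom_of dot A (fun _ => x) (fun _ _ _ H => False_ind _ (proj1 (adj_rel_ts _ _ _ _ _) H)).

Lemma pullback_true_iff {A X : TS} {m : Hom A X} {chi : Hom X omega} {t : Hom A one} :
  is_pullback TS chi true_ts m t -> forall x, nmap chi x = true <-> exists a, nmap m a = x.
Proof.
  intros [Hc Hu] x; split.
  - intro Hx; destruct (Hu dot (point x) (@point one tt)) as [h [[Hh _] _]].
    + apply hom_ext; intros []; exact Hx.
    + exists (nmap h tt); exact (nmap_congr Hh tt).
  - intros [a <-]; exact (nmap_congr Hc a).
Qed.

Section Characteristic.
Context {A X : TS} (m : Hom A X).

Definition char : Hom X omega :=
  @hom_of X omega
    (fun x => if excluded_middle_informative (exists a, nmap m a = x) then true else false)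
    (fun _ _ _ _ => proj2 (adj_rel_ts _ _ _ _ _) I).

Lemma char_true x : nmap char x = true <-> exists a, nmap m a = x.
Proof.
  simpl; destruct excluded_middle_informative as [Hx|Hx]; split; auto; discriminate.
Qed.

(* A point of X in the image of m is equalized by the pair m equalizes; so any map
   classified by [char] equalizes it too and factors through m. *)
Lemma char_is_pullback : regular_mono TS m -> is_pullback TS char true_ts m (to_one A).
Proof.
  intros [Y [f [g [Hm Hu]]]]; split.
  - apply hom_ext; intro a; apply char_true; exists a; reflexivity.
  - intros W a b Hab.
    assert (Hfa : comp f a = comp g a).
    { apply hom_ext; intro w; change (nmap f (nmap a w) = nmap g (nmap a w)).
      destruct (proj1 (char_true (nmap a w)) (nmap_congr Hab w)) as [u <-].
      exact (nmap_congr Hm u). }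
    destruct (Hu W a Hfa) as [h [Hh Huniq]].
    exists h; split.
    + split; [exact Hh|].
      rewrite (to_one_unique b); apply to_one_unique.
    + intros h' [Hh' _]; apply Huniq, Hh'.
Qed.

End Characteristic.

Lemma ts_has_regular_subobject_classifier : has_regular_subobject_classifier TS.
Proof.
  exists one, omega, true_ts; split; [exact one_terminal|split; [exact true_regular_mono|]].
  intros A X m Hm; exists (char m); split.
  - exists (to_one A); apply char_is_pullback, Hm.
  - intros chi [t Ht]; apply hom_ext; intro x; apply eq_true_iff_eq.
    rewrite (pullback_true_iff Ht), char_true; reflexivity.
Qed.

Section Slices.
Variable X : TS.
Local Notation S := (slice TS X).
Local Notation base_map a := (nmap (projT2 a)).

Lemma over_nmap {a b : S} (f : Hom a b) x :
  base_map b (nmap (proj1_sig f) x) = base_map a x.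
Proof. exact (nmap_congr (slice_hom_comm f) x). Qed.

Definition over {a b : S} (h : Hom (projT1 a) (projT1 b))
    (Hh : forall x, base_map b (nmap h x) = base_map a x) : Hom a b :=
  exist _ h (hom_ext (comp (projT2 b) h) (projT2 a) Hh).

Lemma over_ext {a b : S} (f g : Hom a b) :
  (forall x, nmap (proj1_sig f) x = nmap (proj1_sig g) x) -> f = g.
Proof. intro H; apply slice_hom_eq, hom_ext, H. Qed.

Definition sprod (a b : S) : S := pullback_ob (pb1 (projT2 a) (projT2 b)).
Definition sfst (a b : S) : Hom (sprod a b) a := pullback_pr1 (pb1 (projT2 a) (projT2 b)).
Definition ssnd (a b : S) : Hom (sprod a b) b :=
  pullback_pr2 (pb_is_pullback (projT2 a) (projT2 b)).

Lemma sprod_is_product (a b : S) : is_product S (sfst a b) (ssnd a b).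
Proof. apply pullback_is_slice_product. Qed.

Section Exponential.
Variables a b : S.
Local Notation A := (projT1 a).
Local Notation B := (projT1 b).

(* Over a node x of X sit the maps from the fibre of a over x to the fibre of b over x. *)
Record exp_node := {
  exp_base : node X;
  exp_fun : forall u : node A, exp_base = base_map a u -> node B;
  exp_fun_over : forall u H, base_map b (exp_fun u H) = exp_base
}.

Lemma exp_node_eq (e e' : exp_node) :
  exp_base e = exp_base e' -> (forall u H H', exp_fun e u H = exp_fun e' u H') -> e = e'.
Proof.
  destruct e as [x phi Hphi], e' as [x' phi' Hphi']; simpl; intros <- Hfun.
  assert (phi = phi') as <-.
  { apply functional_extensionality_dep; intro u.
    apply functional_extensionality_dep; intro H; apply Hfun. }
  f_equal; apply proof_irrelevance.
Qed.

Lemma exp_fun_congr (e e' : exp_node) u u' H H' :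
  e = e' -> u = u' -> exp_fun e u H = exp_fun e' u' H'.
Proof. intros <- <-; f_equal; apply proof_irrelevance. Qed.

Definition exp_ts : TS :=
  rel_ts exp_node (fun e e' l =>
    adj X (exp_base e) (exp_base e') l /\
    forall u u' H H', adj A u u' l -> adj B (exp_fun e u H) (exp_fun e' u' H') l).

Definition exp_ob : S :=
  existT _ exp_ts
    (@hom_of exp_ts X exp_base (fun _ _ _ H => proj1 (proj1 (adj_rel_ts _ _ _ _ _) H))).

Definition eval : Hom (sprod exp_ob a) b.
Proof.
  unshelve refine (over (@hom_of (projT1 (sprod exp_ob a)) B
    (fun w => exp_fun (fst (proj1_sig w)) (snd (proj1_sig w)) (proj2_sig w)) _) _).
  - intros w w' l H; apply (proj1 (adj_rel_ts _ _ _ _ _)) in H; destruct H as [He Hu].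
    apply (proj1 (adj_rel_ts _ _ _ _ _)) in He; apply He, Hu.
  - intro w; apply exp_fun_over.
Defined.

Section Curry.
Variables (Z : S) (g : Hom (sprod Z a) b).

Definition curry_node (z : node (projT1 Z)) : exp_node := {|
  exp_base := base_map Z z;
  exp_fun := fun u H => nmap (proj1_sig g) (exist _ (z, u) H);
  exp_fun_over := fun u H => over_nmap g (exist _ (z, u) H)
|}.

Definition curry : Hom Z exp_ob.
Proof.
  unshelve refine
    (@over Z exp_ob (@hom_of (projT1 Z) exp_ts curry_node _) (fun _ => eq_refl)).
  intros z z' l H; apply adj_rel_ts; split.
  - apply hom_adj, H.
  - intros u u' Hu Hu' Ha; apply hom_adj, adj_rel_ts; split; assumption.
Defined.

Definition curry_times_a : Hom (sprod Z a) (sprod exp_ob a).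
Proof.
  unshelve refine (@over (sprod Z a) (sprod exp_ob a)
    (@hom_of (projT1 (sprod Z a)) (projT1 (sprod exp_ob a))
      (fun w => exist _ (curry_node (fst (proj1_sig w)), snd (proj1_sig w)) (proj2_sig w)) _)
    (fun _ => eq_refl)).
  intros w w' l H; apply (proj1 (adj_rel_ts _ _ _ _ _)) in H; destruct H as [Hz Hu].
  apply adj_rel_ts; split; [|exact Hu].
  exact (hom_adj (proj1_sig curry) _ _ _ Hz).
Defined.

Lemma curry_spec :
  comp (sfst exp_ob a) curry_times_a = comp curry (sfst Z a) /\
  comp (ssnd exp_ob a) curry_times_a = ssnd Z a /\ comp eval curry_times_a = g.
Proof.
  split; [|split]; apply over_ext; try reflexivity.
  intros [[z u] H]; reflexivity.
Qed.

Lemma curry_unique (h : Hom Z exp_ob) (k : Hom (sprod Z a) (sprod exp_ob a)) :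
  comp (sfst exp_ob a) k = comp h (sfst Z a) -> comp (ssnd exp_ob a) k = ssnd Z a ->
  comp eval k = g -> h = curry.
Proof.
  intros E1 E2 E3; apply over_ext; intro z; apply exp_node_eq.
  - exact (over_nmap h z).
  - intros u H H'; pose (w := exist _ (z, u) H' : node (projT1 (sprod Z a))).
    transitivity (nmap (proj1_sig (comp eval k)) w); [|rewrite E3; reflexivity].
    apply exp_fun_congr.
    + exact (eq_sym (nmap_congr (f_equal (@proj1_sig _ _) E1) w)).
    + exact (eq_sym (nmap_congr (f_equal (@proj1_sig _ _) E2) w)).
Qed.

End Curry.

Lemma exp_is_exponential : is_exponential S (sfst exp_ob a) (ssnd exp_ob a) eval.
Proof.
  apply (exponential_of_chosen_products _ _ _ _ (fun Z => sfst Z a) (fun Z => ssnd Z a)).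
  - apply sprod_is_product.
  - intro Z; apply sprod_is_product.
  - intros Z g; exists (curry Z g); split.
    + exists (curry_times_a Z g); apply curry_spec.
    + intros h [k [E1 [E2 E3]]]; exact (curry_unique Z g h k E1 E2 E3).
Qed.

End Exponential.

Lemma slice_cartesian_closed : cartesian_closed S.
Proof.
  split; [eexists; apply slice_id_terminal|split].
  - intros a b; exists (sprod a b), (sfst a b), (ssnd a b); apply sprod_is_product.
  - intros a b.
    exists (exp_ob a b), (sprod (exp_ob a b) a), (sfst _ _), (ssnd _ _), (eval a b).
    apply exp_is_exponential.
Qed.

End Slices.

End TransitionSystems.

Theorem theorem6 : forall Sigma : Type, quasitopos (TS_cat Sigma).
Proof.
  intro Sigma; split; [|split; [|split]].
  - split; [exists one; apply one_terminal|split].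
    + apply ts_has_binary_products.
    + intros A B f g; exists (eq_ts f g), (eq_incl f g); apply eq_incl_is_equalizer.
  - split; [exists zero; apply zero_initial|split].
    + apply ts_has_binary_coproducts.
    + intros A B f g; exists (coeq_ts f g), (coeq_map f g); apply coeq_map_is_coequalizer.
  - intro X; apply slice_cartesian_closed.
  - apply ts_has_regular_subobject_classifier.
Qed.
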